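(* Let $f(z)=z+\sum_{k=2}^{\infty}a_kz^k$ be analytic in $\mathbb{D}=\{z:|z|<1\}$ with $zf'(z)-f(z)=\frac12 z^2\phi(z)$ for all $z\in\mathbb{D}$, where $\phi$ is analytic in $\mathbb{D}$ and $|\phi(z)|\le1$, and let $s_n(z;f)=z+\sum_{k=2}^n a_kz^k$. Then $\mathrm{Re}\, s_n'(z;f)>0$ in $|z|\le r_0$ for all $n\ge12$, where $r_0=0.547$. *)

From Stdlib Require Import Reals.
From Coquelicot Require Import Coquelicot.

(* C viewed as a normed module over itself (so is_derive is the complex derivative) *)
Definition CNM : NormedModule C_AbsRing := AbsRing_NormedModule C_AbsRing.

Definition in_disk (z : C) : Prop := (Cmod z < 1)%R.

Definition C_is_derive (g : C -> C) (z l : C) : Prop :=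
  @is_derive C_AbsRing CNM g z l.

Definition analytic_in_disk (g : C -> C) : Prop :=
  forall z, in_disk z -> exists l, C_is_derive g z l.

Definition tail_series (a : nat -> C) (z v : C) : Prop :=
  @is_series C_AbsRing CNM (fun k => Cmult (a (k + 2)%nat) (Cpow z (k + 2))) v.

Definition partial_sum (a : nat -> C) (n : nat) (z : C) : C :=
  Cplus z (@sum_n_m C_AbelianGroup (fun k => Cmult (a k) (Cpow z k)) 2 n).

(* Comparing coefficients in z f' - f = z^2 phi / 2, where f' is obtained by
   differentiating the series of f termwise, shows that (k - 1) a_k is the k-th
   coefficient of z^2 phi / 2.  Cauchy's estimate, obtained without integrals by
   averaging over roots of unity, bounds it by 1/2. *)

From Stdlib Require Import Reals Lra Lia.
From Coquelicot Require Import Coquelicot.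

Local Notation is_Cseries := (@is_series C_AbsRing CNM).

(* [ring] and [field] only recognise the concrete operations on [C] and [R]. *)
Ltac unfold_generic_ops :=
  repeat match goal with
  | |- context [@plus ?G] => progress change (@plus G) with Cplus
  | |- context [@plus ?G] => progress change (@plus G) with Rplus
  | |- context [@opp ?G] => progress change (@opp G) with Copp
  | |- context [@minus ?G] => progress change (@minus G) with Cminus
  | |- context [@sum_n ?G] => progress change (@sum_n G) with (@sum_n C_AbelianMonoid)
  | |- context [@one ?K] => progress change (@one K) with (RtoC 1)
  | |- context [@zero ?G] => progress change (@zero G) with (RtoC 0)
  | |- context [@mult ?K] => progress change (@mult K) with Cmult
  | |- context [@scal ?K ?V] => progress change (@scal K V) with Cmult
  | |- context [@norm ?K ?V] => progress change (@norm K V) with Cmod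
  end;
  try match goal with |- ?a = ?b => change (@eq C a b) end.

Lemma sum_n_geom_le (L p : R) (n : nat) :
  0 <= L -> 0 <= p < 1 -> sum_n (fun k => L * p ^ k) n <= L / (1 - p).
Proof.
  intros HL Hp.
  assert (Hsum : forall m, sum_n (fun k => L * p ^ k) m = L * (1 - p ^ S m) / (1 - p)).
  { induction m as [|m IH].
    - rewrite sum_O. simpl. field. lra.
    - rewrite sum_Sn, IH. unfold_generic_ops. simpl. field. lra. }
  rewrite Hsum. apply Rmult_le_compat_r.
  - apply Rlt_le, Rinv_0_lt_compat. lra.
  - pose proof (pow_le p (S n) (proj1 Hp)). nra.
Qed.

Lemma sum_n_m_le_loc (a b : nat -> R) (n m : nat) :
  (forall k, (n <= k <= m)%nat -> a k <= b k) -> sum_n_m a n m <= sum_n_m b n m.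
Proof.
  intros Hab.
  rewrite (sum_n_m_ext_loc a (fun k => Rmin (a k) (b k))).
  - apply sum_n_m_le. intros k. apply Rmin_r.
  - intros k Hk. symmetry. apply Rmin_left, Hab, Hk.
Qed.

Lemma succ_mul_pow_le (t : R) (k : nat) : 0 <= t < 1 -> INR (S k) * t ^ k <= / (1 - t).
Proof.
  intros Ht.
  assert (Hk : INR (S k) * t ^ k * (1 - t) <= 1 - t ^ S k).
  { induction k as [|k IH].
    - simpl. lra.
    - assert (Hp : 0 <= t ^ S k <= 1).
      { split; [apply pow_le; lra | rewrite <- (pow1 (S k)); apply pow_incr; lra]. }
      rewrite S_INR. change (t ^ S (S k)) with (t * t ^ S k).
      change (t ^ S k) with (t * t ^ k) in IH, Hp |- *. nra. }
  apply Rmult_le_reg_r with (1 - t); [lra|].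
  rewrite Rinv_l by lra. pose proof (pow_le t (S k) (proj1 Ht)). lra.
Qed.

Lemma pow_ge_1_sub_mul (d : R) (j : nat) : 0 <= d <= 1 -> 1 - INR j * d <= (1 - d) ^ j.
Proof.
  intros Hd. induction j as [|j IH].
  - simpl. lra.
  - rewrite S_INR. simpl. pose proof (pos_INR j). nra.
Qed.

(** * Complex series *)

(* The comparison test needs completeness, which Coquelicot only provides for the
   product uniform structure on [C]; both structures have the same limits. *)
Lemma is_Cseries_of_complete (u : nat -> C) (l : C) :
  @is_series C_AbsRing C_CompleteNormedModule u l -> is_Cseries u l.
Proof.
  intros Hu P [eps HP].
  assert (He : 0 < eps / 2) by (destruct eps; simpl; lra).
  apply (Hu P). exists (mkposreal _ He). intros y [H1 H2]. apply HP.
  change (Cmod (y - l)%C < eps).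
  change (Rabs (fst y - fst l) < eps / 2) in H1.
  change (Rabs (snd y - snd l) < eps / 2) in H2.
  eapply Rle_lt_trans; [apply Cmod_2Rmax|].
  assert (Hs2 : 0 < sqrt 2 < 2).
  { pose proof (sqrt_sqrt 2). split; [apply sqrt_lt_R0|]; nra. }
  assert (Hm : 0 <= Rmax (Rabs (fst (y - l)%C)) (Rabs (snd (y - l)%C)) < eps / 2).
  { split; [eapply Rle_trans; [apply Rabs_pos | apply Rmax_l]|].
    apply Rmax_lub_lt; simpl; unfold Rminus in *; assumption. }
  nra.
Qed.

Lemma ex_Cseries_le (u : nat -> C) (b : nat -> R) :
  (forall k, Cmod (u k) <= b k) -> ex_series b -> exists l, is_Cseries u l.
Proof.
  intros Hub Hb.
  destruct (@ex_series_le C_AbsRing C_CompleteNormedModule u b Hub Hb) as [l Hl].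
  exists l. apply is_Cseries_of_complete, Hl.
Qed.

Lemma Cmod_Cseries_le_geom (u : nat -> C) (l : C) (L p : R) :
  is_Cseries u l -> 0 <= L -> 0 <= p < 1 -> (forall k, Cmod (u k) <= L * p ^ k) ->
  Cmod l <= L / (1 - p).
Proof.
  intros Hl HL Hp Hu.
  assert (Hpartial : forall n, Cmod (sum_n u n) <= L / (1 - p)).
  { intros n. eapply Rle_trans; [apply (@norm_sum_n_m C_AbsRing CNM)|].
    eapply Rle_trans; [apply sum_n_m_le, Hu | apply sum_n_geom_le; assumption]. }
  assert (Hlim : is_lim_seq (fun n => Cmod (sum_n u n)) (Cmod l)).
  { exact (filterlim_comp _ _ _ (fun n => @sum_n CNM u n) (@norm C_AbsRing CNM)
             eventually (@locally CNM l) _ Hl (@filterlim_norm C_AbsRing CNM l)). }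
  exact (is_lim_seq_le _ _ _ _ Hpartial Hlim (is_lim_seq_const _)).
Qed.

Lemma Cseries_terms_bounded (u : nat -> C) (l : C) :
  is_Cseries u l -> exists M, forall k, Cmod (u k) <= M.
Proof.
  intros Hl.
  destruct (@filterlim_bounded C_AbsRing CNM (sum_n u)) as [M HM]; [exists l; exact Hl|].
  assert (HM' : forall n, Cmod (sum_n u n) <= M) by exact HM.
  exists (2 * M). intros [|k].
  - pose proof (HM' 0%nat) as H0. rewrite sum_O in H0. pose proof (Cmod_ge_0 (u 0%nat)). lra.
  - assert (Hk : u (S k) = (sum_n u (S k) - sum_n u k)%C).
    { rewrite sum_Sn. unfold_generic_ops. ring. }
    rewrite Hk. unfold Cminus. eapply Rle_trans; [apply Cmod_triangle|].
    rewrite Cmod_opp. pose proof (HM' (S k)). pose proof (HM' k). lra.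
Qed.

Lemma Cmod_coef_mul_pow_bounded (c : nat -> C) (w v : C) :
  is_Cseries (fun k => (c k * w ^ k)%C) v -> exists M, forall k, Cmod (c k) * Cmod w ^ k <= M.
Proof.
  intros Hv. destruct (Cseries_terms_bounded _ _ Hv) as [M HM].
  exists M. intros k. rewrite <- Cmod_pow, <- Cmod_mult. apply HM.
Qed.

Lemma is_series_sum_n {K : AbsRing} {V : NormedModule K}
    (u : nat -> nat -> V) (l : nat -> V) (n : nat) :
  (forall m, (m <= n)%nat -> is_series (u m) (l m)) ->
  is_series (fun k => sum_n (fun m => u m k) n) (sum_n l n).
Proof.
  induction n as [|n IH]; intros Hu.
  - rewrite sum_O. refine (is_series_ext _ _ _ _ (Hu 0%nat (le_n 0))).
    intros k. rewrite sum_O. reflexivity.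
  - rewrite sum_Sn.
    refine (is_series_ext _ _ _ _ (is_series_plus _ _ _ _ (IH _) (Hu (S n) (le_n _)))).
    + intros k. rewrite sum_Sn. reflexivity.
    + intros m Hm. apply Hu. lia.
Qed.

Lemma sum_n_Cmult_l (a : C) (u : nat -> C) (n : nat) :
  sum_n (fun k => (a * u k)%C) n = (a * sum_n u n)%C.
Proof.
  induction n as [|n IH]; [rewrite !sum_O; reflexivity|].
  rewrite !sum_Sn, IH. unfold_generic_ops. ring.
Qed.

Lemma sum_n_indicator (v : C) (j n : nat) : (j <= n)%nat ->
  sum_n (fun l => if Nat.eqb l j then v else RtoC 0) n = v.
Proof.
  induction n as [|n IH]; intros Hj.
  - replace j with 0%nat by lia. rewrite sum_O. reflexivity.
  - rewrite sum_Sn. unfold_generic_ops.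
    destruct (Nat.eq_dec j (S n)) as [->|Hne].
    + rewrite Nat.eqb_refl, (sum_n_ext_loc _ (fun _ => zero)).
      * unfold sum_n. rewrite sum_n_m_const_zero. apply Cplus_0_l.
      * intros l Hl. replace (Nat.eqb l (S n)) with false by (symmetry; apply Nat.eqb_neq; lia).
        reflexivity.
    + rewrite IH by lia. replace (Nat.eqb (S n) j) with false by (symmetry; apply Nat.eqb_neq; lia).
      apply Cplus_0_r.
Qed.

(** * Termwise differentiation of power series *)

Lemma Cmod_pow_succ_sub_linear_le (z h : C) (rho : R) (k : nat) :
  Cmod z <= rho -> Cmod (z + h) <= rho ->
  rho * Cmod ((z + h) ^ S k - z ^ S k - INR (S k) * z ^ k * h)%C
  <= INR (S k) ^ 2 * rho ^ k * Cmod h ^ 2.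
Proof.
  intros Hz Hzh.
  assert (Hrho : 0 <= rho) by (eapply Rle_trans; [apply Cmod_ge_0 | exact Hz]).
  induction k as [|k IH].
  - replace ((z + h) ^ 1 - z ^ 1 - INR 1 * z ^ 0 * h)%C with (RtoC 0) by (simpl; ring).
    rewrite Cmod_0, Rmult_0_r. pose proof (Cmod_ge_0 h). simpl. nra.
  - set (E := ((z + h) ^ S k - z ^ S k - INR (S k) * z ^ k * h)%C) in IH.
    assert (Hrec : ((z + h) ^ S (S k) - z ^ S (S k) - INR (S (S k)) * z ^ S k * h)%C
                   = ((z + h) * E + INR (S k) * z ^ k * (h * h))%C).
    { unfold E. rewrite (S_INR (S k)), RtoC_plus. simpl Cpow. ring. }
    rewrite Hrec, (S_INR (S k)).
    eapply Rle_trans; [apply Rmult_le_compat_l; [lra | apply Cmod_triangle]|].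
    rewrite !Cmod_mult, Cmod_pow, Cmod_R, Rabs_pos_eq by apply pos_INR.
    set (n := INR (S k)) in *. set (e := Cmod E) in *.
    assert (Hn : 0 <= n) by apply pos_INR.
    assert (He : 0 <= e) by apply Cmod_ge_0.
    pose proof (Cmod_ge_0 h). pose proof (Cmod_ge_0 (z + h)).
    assert (Hzk : 0 <= Cmod z ^ k <= rho ^ k).
    { split; [apply pow_le, Cmod_ge_0 | apply pow_incr; split; [apply Cmod_ge_0 | lra]]. }
    assert (H1 : Cmod (z + h) * (rho * e) <= rho * (n ^ 2 * rho ^ k * Cmod h ^ 2)).
    { apply Rmult_le_compat; try lra. apply Rmult_le_pos; lra. }
    assert (H2 : n * Cmod h ^ 2 * (rho * Cmod z ^ k) <= n * Cmod h ^ 2 * (rho * rho ^ k)).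
    { apply Rmult_le_compat_l; [apply Rmult_le_pos; [lra | apply pow_le, Cmod_ge_0]|].
      apply Rmult_le_compat_l; lra. }
    assert (H3 : 0 <= rho * rho ^ k * Cmod h ^ 2 * (n + 1)).
    { pose proof (pow_le rho k Hrho). pose proof (pow_le (Cmod h) 2 (Cmod_ge_0 h)).
      apply Rmult_le_pos; [|lra]. apply Rmult_le_pos; [apply Rmult_le_pos|]; lra. }
    simpl pow in *. nra.
Qed.

Lemma C_is_derive_of_quadratic_remainder (f : C -> C) (z l : C) (delta K : R) :
  0 < delta ->
  (forall h, Cmod h < delta -> Cmod (f (z + h) - f z - h * l)%C <= K * Cmod h ^ 2) ->
  C_is_derive f z l.
Proof.
  intros Hdelta Hrem.
  unfold C_is_derive, is_derive, filterdiff. split; [apply is_linear_scal_l|].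
  intros x Hx. apply (@is_filter_lim_locally_unique C_AbsRing CNM) in Hx. subst x.
  intros eps.
  set (K' := Rmax K 1).
  assert (HK' : 0 < K') by (unfold K'; pose proof (Rmax_r K 1); lra).
  assert (Hd : 0 < Rmin delta (eps / K')).
  { apply Rmin_pos; [lra|]. apply Rdiv_lt_0_compat; [apply cond_pos | lra]. }
  exists (mkposreal _ Hd). intros y Hy.
  change (Cmod (y - z)%C < Rmin delta (eps / K')) in Hy.
  change (Cmod (f y - f z - (y - z) * l)%C <= eps * Cmod (y - z)%C).
  set (h := (y - z)%C) in *.
  replace y with (z + h)%C by (unfold h; ring).
  pose proof (Cmod_ge_0 h).
  assert (Hh : Cmod h <= eps / K') by (pose proof (Rmin_r delta (eps / K')); lra).
  assert (HhK : K' * Cmod h <= eps).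
  { apply Rmult_le_reg_l with (/ K'); [apply Rinv_0_lt_compat; lra|].
    rewrite <- Rmult_assoc, Rinv_l, Rmult_1_l by lra. unfold Rdiv in Hh. lra. }
  eapply Rle_trans; [apply Hrem; pose proof (Rmin_l delta (eps / K')); lra|].
  assert (K <= K') by apply Rmax_l.
  replace (K * Cmod h ^ 2) with ((K * Cmod h) * Cmod h) by ring.
  apply Rmult_le_compat_r; [lra|]. nra.
Qed.

Section TermwiseDerivative.

Variables (c : nat -> C) (F : C -> C).
Hypothesis HS : forall w, Cmod w < 1 -> is_Cseries (fun k => (c k * w ^ k)%C) (F w).

Lemma derived_coef_geom_bound (r : R) : 0 <= r < 1 ->
  exists rho L p, r < rho < 1 /\ 0 <= L /\ 0 <= p < 1 /\
    forall k, INR (S k) ^ 2 * Cmod (c (S k)) * rho ^ k <= L * p ^ k.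
Proof.
  intros Hr.
  (* With |c_k| t^k <= M, the radius rho = t^4 leaves the factor (k t^k)^2 t^k,
     and k t^k <= 1 / (1 - t); moreover t^4 >= 4 t - 3 = (1 + r) / 2 > r. *)
  set (t := (7 + r) / 8).
  assert (Ht : 7 / 8 <= t < 1) by (unfold t; lra).
  destruct (Cmod_coef_mul_pow_bounded c (RtoC t) (F t)) as [M HM].
  { apply HS. rewrite Cmod_R, Rabs_pos_eq; lra. }
  rewrite Cmod_R, Rabs_pos_eq in HM by lra.
  assert (HM0 : 0 <= M).
  { eapply Rle_trans; [|apply (HM 0%nat)]. apply Rmult_le_pos; [apply Cmod_ge_0 | simpl; lra]. }
  exists (t ^ 4), (M / (t * (1 - t) ^ 2)), t.
  split; [|split; [|split; [lra|]]].
  - assert (0 <= (t - 1) ^ 2 * (t ^ 2 + 2 * t + 3)) by (apply Rmult_le_pos; nra).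
    assert (t ^ 4 = (t - 1) ^ 2 * (t ^ 2 + 2 * t + 3) + 4 * t - 3) by ring.
    assert (t ^ 4 = (t * t) * (t * t)) by ring.
    assert (t * t < 1) by nra.
    assert (8 * t = 7 + r) by (unfold t; lra).
    split; nra.
  - apply Rdiv_le_0_compat; [lra|]. apply Rmult_lt_0_compat; [lra | apply pow_lt; lra].
  - intros k.
    pose proof (succ_mul_pow_le t k ltac:(lra)) as Hlin.
    assert (Htk : 0 <= t ^ k) by (apply pow_le; lra).
    assert (Hlin0 : 0 <= INR (S k) * t ^ k) by (apply Rmult_le_pos; [apply pos_INR | lra]).
    replace (INR (S k) ^ 2 * Cmod (c (S k)) * (t ^ 4) ^ k)
      with ((INR (S k) * t ^ k) ^ 2 * (Cmod (c (S k)) * t ^ S k) * t ^ k / t)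
      by (rewrite <- pow_mult; replace (4 * k)%nat with (k + k + k + k)%nat by lia;
          rewrite !pow_add; simpl; field; lra).
    replace (M / (t * (1 - t) ^ 2) * t ^ k) with ((/ (1 - t)) ^ 2 * M * t ^ k / t)
      by (field; lra).
    unfold Rdiv. apply Rmult_le_compat_r; [apply Rlt_le, Rinv_0_lt_compat; lra|].
    apply Rmult_le_compat_r; [lra|].
    pose proof (Cmod_ge_0 (c (S k))). pose proof (pow_le t (S k) ltac:(lra)).
    apply Rmult_le_compat;
      [apply pow_le; lra | apply Rmult_le_pos; lra | apply pow_incr; lra | apply HM].
Qed.

Lemma derived_series_converges (z : C) : Cmod z < 1 ->
  exists D, is_Cseries (fun k => (INR (S k) * c (S k) * z ^ k)%C) D.
Proof.
  intros Hz.
  destruct (derived_coef_geom_bound (Cmod z)) as (rho & L & p & Hrho & HL & Hp & Hcoef).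
  { split; [apply Cmod_ge_0 | exact Hz]. }
  apply ex_Cseries_le with (b := fun k => L * p ^ k).
  - intros k. eapply Rle_trans; [|apply Hcoef].
    rewrite !Cmod_mult, Cmod_pow, Cmod_R, Rabs_pos_eq by apply pos_INR.
    assert (H1 : 1 <= INR (S k)) by (rewrite S_INR; pose proof (pos_INR k); lra).
    assert (Hzk : Cmod z ^ k <= rho ^ k) by (apply pow_incr; split; [apply Cmod_ge_0 | lra]).
    pose proof (pow_le (Cmod z) k (Cmod_ge_0 z)). pose proof (Cmod_ge_0 (c (S k))).
    assert (0 <= Cmod (c (S k)) * Cmod z ^ k <= Cmod (c (S k)) * rho ^ k).
    { split; [apply Rmult_le_pos | apply Rmult_le_compat_l]; lra. }
    replace (INR (S k) ^ 2 * Cmod (c (S k)) * rho ^ k)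
      with (INR (S k) * (INR (S k) * (Cmod (c (S k)) * rho ^ k))) by ring.
    rewrite Rmult_assoc. apply Rmult_le_compat_l; [lra|]. nra.
  - apply (ex_series_scal_l (V := R_NormedModule) L), ex_series_geom. rewrite Rabs_pos_eq; lra.
Qed.

Theorem is_derive_power_series (z D : C) : Cmod z < 1 ->
  is_Cseries (fun k => (INR (S k) * c (S k) * z ^ k)%C) D -> C_is_derive F z D.
Proof.
  intros Hz HD.
  destruct (derived_coef_geom_bound (Cmod z)) as (rho & L & p & Hrho & HL & Hp & Hcoef).
  { split; [apply Cmod_ge_0 | exact Hz]. }
  pose proof (Cmod_ge_0 z).
  apply C_is_derive_of_quadratic_remainder with (delta := rho - Cmod z) (K := L / (rho * (1 - p)));
    [lra|].
  intros h Hh.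
  assert (Hzh : Cmod (z + h) <= rho) by (pose proof (Cmod_triangle z h); lra).
  assert (Hrem : is_Cseries
    (fun k => (c (S k) * ((z + h) ^ S k - z ^ S k - INR (S k) * z ^ k * h))%C)
    (F (z + h) - F z - h * D)%C).
  { assert (Hdiff := is_series_minus _ _ _ _ (HS (z + h) ltac:(lra)) (HS z Hz)).
    assert (Hdiff1 : is_Cseries (fun k => (c (S k) * (z + h) ^ S k - c (S k) * z ^ S k)%C)
                                (F (z + h) - F z)%C).
    { apply (@is_series_incr_1 C_AbsRing CNM (fun k => (c k * (z + h) ^ k - c k * z ^ k)%C)).
      match goal with |- is_series _ ?l =>
        replace l with (plus (F (z + h)) (opp (F z))) by (unfold_generic_ops; simpl; ring) end.
      exact Hdiff. }
    refine (is_series_ext _ _ _ _ (is_series_minus _ _ _ _ Hdiff1 (is_series_scal_l h _ _ HD))).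
    intros k. unfold_generic_ops. ring. }
  eapply Rle_trans.
  - apply (Cmod_Cseries_le_geom _ _ (L * Cmod h ^ 2 / rho) p Hrem); [|exact Hp|].
    + apply Rdiv_le_0_compat; [apply Rmult_le_pos; [lra | apply pow_le, Cmod_ge_0] | lra].
    + intros k. rewrite Cmod_mult.
      pose proof (Cmod_pow_succ_sub_linear_le z h rho k ltac:(lra) Hzh) as Hk.
      pose proof (Cmod_ge_0 (c (S k))).
      apply Rmult_le_reg_l with rho; [lra|].
      replace (rho * (L * Cmod h ^ 2 / rho * p ^ k)) with (L * p ^ k * Cmod h ^ 2) by (field; lra).
      apply Rle_trans with (Cmod (c (S k)) * (INR (S k) ^ 2 * rho ^ k * Cmod h ^ 2)).
      * rewrite <- Rmult_assoc, (Rmult_comm rho), Rmult_assoc. apply Rmult_le_compat_l; assumption.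
      * replace (Cmod (c (S k)) * (INR (S k) ^ 2 * rho ^ k * Cmod h ^ 2))
          with (INR (S k) ^ 2 * Cmod (c (S k)) * rho ^ k * Cmod h ^ 2) by ring.
        apply Rmult_le_compat_r; [apply pow_le, Cmod_ge_0 | apply Hcoef].
  - apply Req_le. field. lra.
Qed.

End TermwiseDerivative.

(** * Roots of unity and Cauchy's estimate *)

Definition cis (t : R) : C := (cos t, sin t).

Lemma Cpow_cis (t : R) (m : nat) : (cis t ^ m)%C = cis (INR m * t).
Proof.
  induction m as [|m IH].
  - unfold cis. simpl. rewrite Rmult_0_l, cos_0, sin_0. reflexivity.
  - rewrite Cpow_S, IH, S_INR. unfold cis, Cmult. simpl.
    replace ((INR m + 1) * t) with (t + INR m * t) by ring.
    rewrite cos_plus, sin_plus. f_equal; ring.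
Qed.

Lemma Cmod_cis (t : R) : Cmod (cis t) = 1.
Proof.
  unfold Cmod, cis. simpl. pose proof (sin2_cos2 t) as H. unfold Rsqr in H.
  replace (cos t * (cos t * 1) + sin t * (sin t * 1)) with 1 by lra. apply sqrt_1.
Qed.

Lemma cis_neq_1 (t : R) : 0 < t < 2 * PI -> cis t <> 1.
Proof.
  intros Ht E. injection E as Ecos Esin.
  destruct (Rlt_le_dec t PI) as [Hlt|Hge].
  - pose proof (sin_gt_0 t ltac:(lra) Hlt). lra.
  - destruct (Req_dec t PI) as [->|Hne].
    + rewrite cos_PI in Ecos. lra.
    + pose proof (sin_lt_0 t ltac:(lra) ltac:(lra)). lra.
Qed.

Definition unit_root (N : nat) : C := cis (2 * PI / INR N).

Lemma Cmod_unit_root_pow (N m : nat) : Cmod (unit_root N ^ m) = 1.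
Proof. unfold unit_root. rewrite Cpow_cis. apply Cmod_cis. Qed.

Lemma unit_root_pow_N (N : nat) : (0 < N)%nat -> (unit_root N ^ N)%C = 1.
Proof.
  intros HN. unfold unit_root. rewrite Cpow_cis.
  assert (0 < INR N) by (apply lt_0_INR; exact HN).
  replace (INR N * (2 * PI / INR N)) with (2 * PI) by (field; lra).
  unfold cis. rewrite cos_2PI, sin_2PI. reflexivity.
Qed.

Lemma unit_root_pow_neq_1 (N s : nat) : (0 < s < N)%nat -> (unit_root N ^ s)%C <> 1.
Proof.
  intros Hs. unfold unit_root. rewrite Cpow_cis. apply cis_neq_1.
  assert (0 < INR s < INR N) by (split; [apply lt_0_INR | apply lt_INR]; lia).
  pose proof PI_RGT_0.
  replace (INR s * (2 * PI / INR N)) with (2 * PI * (INR s / INR N)) by (field; lra).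
  assert (0 < INR s / INR N < 1).
  { split; [apply Rdiv_lt_0_compat; lra|]. apply Rmult_lt_reg_r with (INR N); [lra|].
    field_simplify; lra. }
  nra.
Qed.

Lemma sum_n_pow_root_of_unity (x : C) (n : nat) :
  (x ^ S n)%C = 1 -> x <> 1 -> sum_n (fun m => (x ^ m)%C) n = RtoC 0.
Proof.
  intros Hx Hx1.
  assert (Hgeom : forall k, ((1 - x) * sum_n (fun m => (x ^ m)%C) k)%C = (1 - x ^ S k)%C).
  { induction k as [|k IH].
    - rewrite sum_O. simpl. ring.
    - rewrite sum_Sn. unfold_generic_ops. rewrite Cmult_plus_distr_l, IH. simpl. ring. }
  assert (Hne : (1 - x)%C <> 0) by (intros E; apply Hx1; rewrite <- (Cplus_0_l x), <- E; ring).
  rewrite <- (Cmult_1_l (sum_n _ n)), <- (Cinv_l (1 - x)%C Hne), <- Cmult_assoc, Hgeom, Hx.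
  unfold_generic_ops. ring.
Qed.

(* [root_sum n s] is N or 0 according as N divides s, where N = n + 1;
   only the range s < 2 N is needed. *)
Definition root_sum (n s : nat) : C := sum_n (fun m => ((unit_root (S n) ^ s) ^ m)%C) n.

Lemma root_sum_N (n : nat) : root_sum n (S n) = INR (S n).
Proof.
  unfold root_sum. rewrite unit_root_pow_N by lia.
  rewrite (sum_n_ext _ (fun _ => RtoC 1)) by (intros m; apply Cpow_1_l).
  induction n as [|n IH]; [rewrite sum_O; reflexivity|].
  rewrite sum_Sn, IH, (S_INR (S n)), RtoC_plus. reflexivity.
Qed.

Lemma root_sum_eq_0 (n s : nat) : (0 < s < 2 * S n)%nat -> s <> S n -> root_sum n s = 0.
Proof.
  intros Hs HsN. unfold root_sum. apply sum_n_pow_root_of_unity.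
  - rewrite <- Cpow_mult_r, Nat.mul_comm, Cpow_mult_r, unit_root_pow_N by lia. apply Cpow_1_l.
  - destruct (Nat.lt_ge_cases s (S n)).
    + apply unit_root_pow_neq_1. lia.
    + replace s with (S n + (s - S n))%nat by lia.
      rewrite Cpow_add_r, unit_root_pow_N, Cmult_1_l by lia. apply unit_root_pow_neq_1. lia.
Qed.

Lemma Cmod_root_sum_le (n s : nat) : Cmod (root_sum n s) <= INR (S n).
Proof.
  unfold root_sum. eapply Rle_trans; [apply (@norm_sum_n_m C_AbsRing CNM)|].
  rewrite (sum_n_m_ext _ (fun _ => 1)).
  - rewrite sum_n_m_const. rewrite Nat.sub_0_r. lra.
  - intros m. rewrite <- Cpow_mult_r. apply Cmod_unit_root_pow.
Qed.

Lemma RtoC_INR_S_neq_0 (n : nat) : RtoC (INR (S n)) <> 0.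
Proof.
  intros E. assert (H : INR (S n) = 0) by exact (f_equal fst E). revert H. apply not_0_INR. lia.
Qed.

Section CauchyEstimate.

Variables (c : nat -> C) (G : C -> C) (beta : R).
Hypothesis HG : forall w, Cmod w < 1 -> is_Cseries (fun k => (c k * w ^ k)%C) (G w).
Hypothesis HGb : forall w, Cmod w < 1 -> Cmod (G w) <= beta.

(* A discrete Cauchy integral: G averaged against w^-j over the points r * w^m,
   w a primitive (n+1)-st root of unity.  Its power series keeps exactly the
   coefficients of index = j mod (n+1). *)
Lemma root_filter_series (r : R) (n j : nat) : 0 <= r < 1 -> (j <= n)%nat ->
  exists V, Cmod V <= beta /\
    is_Cseries (fun l => (c l * r ^ l * root_sum n (S n - j + l) / INR (S n))%C) V.
Proof.
  intros Hr Hj.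
  set (w := unit_root (S n)).
  assert (HN : 0 < INR (S n)) by (apply lt_0_INR; lia).
  pose proof (RtoC_INR_S_neq_0 n) as HNC.
  set (kap := fun m => ((w ^ (S n - j)) ^ m / INR (S n))%C).
  assert (Hw : forall m, Cmod (r * w ^ m)%C < 1).
  { intros m. rewrite Cmod_mult, Cmod_R, Rabs_pos_eq by lra. unfold w.
    rewrite Cmod_unit_root_pow. lra. }
  exists (sum_n (fun m => (kap m * G (r * w ^ m))%C) n). split.
  - eapply Rle_trans; [apply (@norm_sum_n_m C_AbsRing CNM)|].
    eapply Rle_trans; [apply sum_n_m_le with (b := fun _ => beta / INR (S n))|].
    + intros m. unfold_generic_ops. unfold kap, Cdiv, w.
      rewrite !Cmod_mult, Cmod_inv, <- Cpow_mult_r, Cmod_unit_root_pow.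
      * rewrite Cmod_R, Rabs_pos_eq by lra. unfold Rdiv. rewrite Rmult_1_l, Rmult_comm.
        apply Rmult_le_compat_r; [apply Rlt_le, Rinv_0_lt_compat; lra | apply HGb, Hw].
      * exact HNC.
    + rewrite sum_n_m_const, Nat.sub_0_r. apply Req_le. field. apply not_0_INR. lia.
  - refine (is_series_ext _ _ _ _
      (@is_series_sum_n C_AbsRing CNM (fun m k => (kap m * (c k * (r * w ^ m) ^ k))%C)
                       (fun m => (kap m * G (r * w ^ m))%C) n _)).
    + intros l. unfold root_sum. fold w.
      transitivity (c l * r ^ l / INR (S n) * sum_n (fun m => ((w ^ (S n - j + l)) ^ m)%C) n)%C.
      * rewrite <- sum_n_Cmult_l. apply sum_n_ext. intros m. unfold kap.
        rewrite Cpow_mult_l, <- !Cpow_mult_r.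
        replace ((S n - j + l) * m)%nat with ((S n - j) * m + m * l)%nat by lia.
        rewrite Cpow_add_r. unfold_generic_ops. field. exact HNC.
      * unfold_generic_ops. field. exact HNC.
    + intros m _. exact (@is_series_scal_l C_AbsRing CNM (kap m) _ _ (HG _ (Hw m))).
Qed.

Lemma root_filter_head (r : R) (n j : nat) : (j <= n)%nat ->
  sum_n (fun l => (c l * r ^ l * root_sum n (S n - j + l) / INR (S n))%C) n = (c j * r ^ j)%C.
Proof.
  intros Hj. pose proof (RtoC_INR_S_neq_0 n) as HNC.
  rewrite <- (sum_n_indicator (c j * r ^ j) j n Hj). apply sum_n_ext_loc. intros l Hl.
  destruct (Nat.eq_dec l j) as [->|Hne].
  - rewrite Nat.eqb_refl. replace (S n - j + j)%nat with (S n) by lia.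
    rewrite root_sum_N. unfold_generic_ops. field. exact HNC.
  - replace (Nat.eqb l j) with false by (symmetry; apply Nat.eqb_neq, Hne).
    rewrite root_sum_eq_0 by lia. unfold_generic_ops. unfold Cdiv. ring.
Qed.

Lemma Cmod_root_filter_term_le (r : R) (n s l : nat) : 0 <= r ->
  Cmod (c l * r ^ l * root_sum n s / INR (S n))%C <= Cmod (c l) * r ^ l.
Proof.
  intros Hr.
  assert (HN : 0 < INR (S n)) by (apply lt_0_INR; lia).
  rewrite Cmod_div, !Cmod_mult, Cmod_pow, !Cmod_R, !Rabs_pos_eq
    by (lra || exact (RtoC_INR_S_neq_0 n)).
  assert (0 <= Cmod (c l) * r ^ l) by (apply Rmult_le_pos; [apply Cmod_ge_0 | apply pow_le; lra]).
  pose proof (Cmod_root_sum_le n s). pose proof (Cmod_ge_0 (root_sum n s)).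
  apply Rmult_le_reg_r with (INR (S n)); [lra|].
  field_simplify; [|lra]. nra.
Qed.

Lemma Cmod_coef_mul_pow_le_tail (r rho M : R) (j n : nat) :
  0 <= r < rho -> rho < 1 -> (forall k, Cmod (c k) * rho ^ k <= M) -> (j <= n)%nat ->
  Cmod (c j) * r ^ j <= beta + M / (1 - r / rho) * (r / rho) ^ S n.
Proof.
  intros Hr Hrho HM Hj.
  destruct (root_filter_series r n j ltac:(lra) Hj) as [V [HV Hser]].
  set (t := fun l => (c l * r ^ l * root_sum n (S n - j + l) / INR (S n))%C) in Hser.
  set (q := r / rho).
  assert (Hq : 0 <= q < 1).
  { unfold q. split; [apply Rdiv_le_0_compat; lra|].
    apply Rmult_lt_reg_r with rho; [lra|]. field_simplify; lra. }
  assert (Htail : is_Cseries (fun k => t (S n + k)%nat) (V - c j * r ^ j)%C).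
  { apply (is_series_incr_n _ (S n)); [lia|]. simpl pred. unfold_generic_ops. unfold t.
    rewrite (root_filter_head r n j Hj).
    replace (V - c j * r ^ j + c j * r ^ j)%C with V by ring. exact Hser. }
  assert (Hbound : Cmod (V - c j * r ^ j)%C <= M * q ^ S n / (1 - q)).
  { apply (Cmod_Cseries_le_geom _ _ _ q Htail); [|exact Hq|].
    - apply Rmult_le_pos; [|apply pow_le; lra].
      eapply Rle_trans; [|apply (HM 0%nat)]. apply Rmult_le_pos; [apply Cmod_ge_0 | simpl; lra].
    - intros k. eapply Rle_trans; [apply Cmod_root_filter_term_le; lra|].
      set (l := (S n + k)%nat).
      replace (M * q ^ S n * q ^ k) with (q ^ l * M) by (unfold l; rewrite pow_add; ring).
      assert (Hrl : r ^ l = q ^ l * rho ^ l).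
      { unfold q. rewrite <- Rpow_mult_distr. f_equal. field. lra. }
      rewrite Hrl.
      replace (Cmod (c l) * (q ^ l * rho ^ l)) with (q ^ l * (Cmod (c l) * rho ^ l)) by ring.
      apply Rmult_le_compat_l; [apply pow_le; lra | apply HM]. }
  replace (Cmod (c j) * r ^ j) with (Cmod (V - (V - c j * r ^ j))%C)
    by (replace (V - (V - c j * r ^ j))%C with (c j * r ^ j)%C by ring;
        rewrite Cmod_mult, Cmod_pow, Cmod_R, Rabs_pos_eq by lra; reflexivity).
  unfold Cminus at 1. eapply Rle_trans; [apply Cmod_triangle|]. rewrite Cmod_opp.
  replace (M / (1 - q) * q ^ S n) with (M * q ^ S n / (1 - q)) by (field; lra). lra.
Qed.

Lemma Cmod_coef_mul_pow_le (r : R) (j : nat) : 0 <= r < 1 -> Cmod (c j) * r ^ j <= beta.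
Proof.
  intros Hr. set (rho := (1 + r) / 2).
  destruct (Cmod_coef_mul_pow_bounded c (RtoC rho) (G rho)) as [M HM].
  { apply HG. rewrite Cmod_R, Rabs_pos_eq; unfold rho; lra. }
  rewrite Cmod_R, Rabs_pos_eq in HM by (unfold rho; lra).
  set (q := r / rho).
  assert (Hq : Rabs q < 1).
  { unfold q, rho. rewrite Rabs_pos_eq by (apply Rdiv_le_0_compat; lra).
    apply Rmult_lt_reg_r with ((1 + r) / 2); [lra|]. field_simplify; lra. }
  assert (Hlim : is_lim_seq (fun N => beta + M / (1 - q) * q ^ N) (beta + M / (1 - q) * 0)).
  { apply is_lim_seq_plus'; [apply is_lim_seq_const|].
    apply is_lim_seq_mult'; [apply is_lim_seq_const | apply is_lim_seq_geom, Hq]. }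
  rewrite Rmult_0_r, Rplus_0_r in Hlim.
  refine (is_lim_seq_le_loc (fun _ => Cmod (c j) * r ^ j) _ _ _ _ (is_lim_seq_const _) Hlim).
  exists (S j). intros [|n] Hn; [lia|].
  apply Cmod_coef_mul_pow_le_tail; [unfold rho; lra | unfold rho; lra | exact HM | lia].
Qed.

Theorem Cmod_coef_le (j : nat) : Cmod (c j) <= beta.
Proof.
  apply Rle_plus_epsilon. intros eps Heps.
  set (X := Cmod (c j)).
  assert (HX : 0 <= X) by apply Cmod_ge_0.
  pose proof (pos_INR j) as Hj.
  set (d := Rmin (1 / 2) (eps / (X * INR j + 1))).
  assert (Hd : 0 < d <= 1 / 2).
  { split; [apply Rmin_pos; [lra|] | apply Rmin_l]. apply Rdiv_lt_0_compat; nra. }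
  assert (HdX : X * INR j * d <= eps).
  { apply Rle_trans with ((X * INR j + 1) * d); [nra|].
    apply Rmult_le_reg_r with (/ (X * INR j + 1)); [apply Rinv_0_lt_compat; nra|].
    replace ((X * INR j + 1) * d * / (X * INR j + 1)) with d by (field; nra).
    apply Rmin_r. }
  pose proof (pow_ge_1_sub_mul d j ltac:(lra)) as Hbern.
  pose proof (Cmod_coef_mul_pow_le (1 - d) j ltac:(lra)) as Hr. fold X in Hr.
  assert (X * (1 - INR j * d) <= X * (1 - d) ^ j) by (apply Rmult_le_compat_l; lra).
  lra.
Qed.

End CauchyEstimate.

(** * The coefficient bound *)

Definition tail_coef (a : nat -> C) (k : nat) : C :=
  match k with 0%nat | 1%nat => RtoC 0 | _ => a k end.

Lemma is_Cseries_tail_coef (a : nat -> C) (w v : C) :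
  tail_series a w v -> is_Cseries (fun k => (tail_coef a k * w ^ k)%C) v.
Proof.
  intros Hv.
  refine (@is_series_decr_1 C_AbsRing CNM _ _ (@is_series_decr_1 C_AbsRing CNM _ _ _)).
  match goal with |- is_series _ ?l => replace l with v by (unfold_generic_ops; simpl; ring) end.
  refine (is_series_ext _ _ _ _ Hv). intros k. rewrite Nat.add_comm. reflexivity.
Qed.

Lemma is_Cseries_mul_derived (c : nat -> C) (w D : C) :
  is_Cseries (fun k => (INR (S k) * c (S k) * w ^ k)%C) D ->
  is_Cseries (fun k => (INR k * c k * w ^ k)%C) (w * D)%C.
Proof.
  intros HD.
  refine (@is_series_decr_1 C_AbsRing CNM _ _ _).
  match goal with |- is_series _ ?l =>
    replace l with (w * D)%C by (unfold_generic_ops; simpl; ring) end.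
  refine (is_series_ext _ _ _ _ (is_series_scal_l w _ _ HD)).
  intros k. unfold_generic_ops. rewrite Cpow_S. ring.
Qed.

Theorem coef_bound (f phi : C -> C) (a : nat -> C) :
  (forall z, in_disk z -> tail_series a z (f z - z)%C) ->
  (forall z, in_disk z -> Cmod (phi z) <= 1) ->
  (forall z, in_disk z -> forall fd, C_is_derive f z fd ->
     (z * fd - f z)%C = (/ RtoC 2 * z ^ 2 * phi z)%C) ->
  forall k, (2 <= k)%nat -> (INR k - 1) * Cmod (a k) <= 1 / 2.
Proof.
  intros Hf Hphi Hrel.
  set (c := tail_coef a).
  set (G := fun w => (/ RtoC 2 * w ^ 2 * phi w)%C).
  assert (HS : forall w, Cmod w < 1 -> is_Cseries (fun k => (c k * w ^ k)%C) (f w - w)%C)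
    by (intros w Hw; apply is_Cseries_tail_coef, Hf, Hw).
  assert (HG : forall w, Cmod w < 1 ->
            is_Cseries (fun k => (RtoC (INR k - 1) * c k * w ^ k)%C) (G w)).
  { intros w Hw.
    destruct (derived_series_converges c _ HS w Hw) as [D HD].
    assert (Hf' : C_is_derive f w (D + 1)%C).
    { refine (@is_derive_ext C_AbsRing CNM (fun u => (f u - u) + u)%C f _ _ _
                (@is_derive_plus C_AbsRing CNM _ _ _ _ _ (is_derive_power_series c _ HS w D Hw HD)
                   (@is_derive_id C_AbsRing w))).
      intros u. unfold_generic_ops. ring. }
    unfold G. rewrite <- (Hrel w Hw _ Hf').
    replace (w * (D + 1) - f w)%C with (w * D - (f w - w))%C by ring.
    refine (is_series_ext _ _ _ _
              (is_series_minus _ _ _ _ (is_Cseries_mul_derived c w D HD) (HS w Hw))).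
    intros k. unfold_generic_ops. rewrite RtoC_minus. ring. }
  assert (HGb : forall w, Cmod w < 1 -> Cmod (G w) <= 1 / 2).
  { intros w Hw. unfold G.
    rewrite !Cmod_mult, Cmod_pow, Cmod_inv, Cmod_R, Rabs_pos_eq
      by (try lra; intros E; injection E; lra).
    pose proof (Hphi w Hw). pose proof (Cmod_ge_0 w). pose proof (Cmod_ge_0 (phi w)).
    assert (Cmod w ^ 2 <= 1) by nra.
    assert (Cmod w ^ 2 * Cmod (phi w) <= 1) by (pose proof (pow_le (Cmod w) 2 (Cmod_ge_0 w)); nra).
    lra. }
  intros k Hk.
  pose proof (Cmod_coef_le _ G (1 / 2) HG HGb k) as Hck.
  destruct k as [|[|k]]; [lia | lia|].
  assert (2 <= INR (S (S k))) by (rewrite !S_INR; pose proof (pos_INR k); lra).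
  rewrite Cmod_mult, Cmod_R, Rabs_pos_eq in Hck by lra. exact Hck.
Qed.

(** * The partial sums on the disk of radius r0 *)

Lemma is_derive_sum_n_m {K : AbsRing} {V : NormedModule K}
    (f : nat -> K -> V) (d : nat -> V) (m n : nat) (x : K) :
  (forall k, is_derive (f k) x (d k)) ->
  is_derive (fun y => sum_n_m (fun k => f k y) m n) x (sum_n_m d m n).
Proof.
  intros Hd.
  assert (Hzero : forall p, (p < m)%nat ->
            is_derive (fun y => sum_n_m (fun k => f k y) m p) x (sum_n_m d m p)).
  { intros p Hp. rewrite sum_n_m_zero by lia.
    refine (is_derive_ext (fun _ => zero) _ _ _ _ (is_derive_const _ _)).
    intros y. rewrite sum_n_m_zero by lia. reflexivity. }
  induction n as [|n IH].
  - destruct m as [|m]; [|apply Hzero; lia].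
    rewrite sum_n_n. refine (is_derive_ext (f 0%nat) _ _ _ _ (Hd 0%nat)).
    intros y. rewrite sum_n_n. reflexivity.
  - destruct (Nat.le_gt_cases m (S n)) as [Hm|Hm]; [|apply Hzero; lia].
    rewrite sum_n_Sm by lia.
    refine (is_derive_ext _ _ _ _ _ (is_derive_plus _ _ _ _ _ IH (Hd (S n)))).
    intros y. simpl. rewrite sum_n_Sm by lia. reflexivity.
Qed.

Lemma is_derive_Cpow (k : nat) (z : C) :
  C_is_derive (fun w => (w ^ k)%C) z (INR k * z ^ pred k)%C.
Proof.
  induction k as [|k IH].
  - replace (INR 0 * z ^ pred 0)%C with (RtoC 0) by (simpl; ring).
    exact (@is_derive_const C_AbsRing CNM (RtoC 1) z).
  - replace (INR (S k) * z ^ pred (S k))%C with (1 * z ^ k + z * (INR k * z ^ pred k))%C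
      by (rewrite S_INR, RtoC_plus; destruct k as [|k]; simpl; ring).
    exact (@is_derive_mult C_AbsRing (fun w => w) (fun w => (w ^ k)%C) z _ _
             (@is_derive_id C_AbsRing z) IH Cmult_comm).
Qed.

Lemma is_derive_partial_sum (a : nat -> C) (n : nat) (z : C) :
  C_is_derive (partial_sum a n) z (1 + sum_n_m (fun k => a k * (INR k * z ^ pred k)) 2 n)%C.
Proof.
  refine (@is_derive_plus C_AbsRing CNM _ _ _ _ _ (@is_derive_id C_AbsRing z) _).
  refine (@is_derive_sum_n_m C_AbsRing CNM (fun k w => (a k * w ^ k)%C) _ 2 n z _). intros k.
  replace (a k * (INR k * z ^ pred k))%C with (0 * z ^ k + a k * (INR k * z ^ pred k))%C by ring.
  exact (@is_derive_mult C_AbsRing (fun _ => a k) (fun w => (w ^ k)%C) z _ _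
           (@is_derive_const C_AbsRing CNM (a k) z) (is_derive_Cpow k z) Cmult_comm).
Qed.

Definition r0 : R := 547 / 1000.

(* The bound for |k a_k z^(k-1)| on |z| <= r0 given by |a_k| <= 1/(2(k-1)). *)
Definition majorant_term (k : nat) : R := INR k / (2 * (INR k - 1)) * r0 ^ pred k.

Definition majorant (n : nat) : R := sum_n_m majorant_term 2 n.

Lemma majorant_S (n : nat) : (1 <= n)%nat -> majorant (S n) = majorant n + majorant_term (S n).
Proof. intros Hn. unfold majorant. rewrite sum_n_Sm by lia. reflexivity. Qed.

Lemma majorant_le_10 (n : nat) : (n <= 10)%nat -> majorant n <= majorant 10.
Proof.
  intros Hn. remember (10 - n)%nat as d eqn:Hd. revert n Hn Hd.
  induction d as [|d IH]; intros n Hn Hd.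
  - replace n with 10%nat by lia. lra.
  - eapply Rle_trans; [|apply (IH (S n)); lia].
    destruct (Nat.le_gt_cases 1 n) as [H1|H1].
    + rewrite majorant_S by exact H1. unfold majorant_term.
      assert (2 <= INR (S n)) by (rewrite S_INR; apply (le_INR 1) in H1; simpl in H1; lra).
      assert (0 <= r0 ^ pred (S n)) by (apply pow_le; unfold r0; lra).
      assert (0 <= INR (S n) / (2 * (INR (S n) - 1))) by (apply Rdiv_le_0_compat; lra).
      nra.
    + unfold majorant. rewrite !sum_n_m_zero by lia. lra.
Qed.

(* For k >= 11 the factor k / (2 (k - 1)) is at most 11/20, so the tail is geometric. *)
Lemma majorant_tail_le (m : nat) :
  majorant (10 + m) + 11 / 20 * r0 ^ (10 + m) / (1 - r0)
  <= majorant 10 + 11 / 20 * r0 ^ 10 / (1 - r0).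
Proof.
  induction m as [|m IH]; [rewrite Nat.add_0_r; lra|].
  replace (10 + S m)%nat with (S (10 + m)) by lia.
  rewrite majorant_S by lia.
  assert (Hterm : majorant_term (S (10 + m)) <= 11 / 20 * r0 ^ (10 + m)).
  { unfold majorant_term. simpl pred.
    assert (11 <= INR (S (10 + m))).
    { replace 11 with (INR 11) by (simpl; lra). apply le_INR. lia. }
    apply Rmult_le_compat_r; [apply pow_le; unfold r0; lra|].
    apply Rmult_le_reg_r with (2 * (INR (S (10 + m)) - 1)); [lra|].
    field_simplify; lra. }
  replace (11 / 20 * r0 ^ S (10 + m) / (1 - r0))
    with (11 / 20 * r0 ^ (10 + m) / (1 - r0) - 11 / 20 * r0 ^ (10 + m))
    by (simpl; field; unfold r0; lra).
  lra.
Qed.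

Lemma majorant_10_lt_1 : majorant 10 + 11 / 20 * r0 ^ 10 / (1 - r0) < 1.
Proof.
  unfold majorant. do 8 (rewrite sum_n_Sm; [|lia]). rewrite sum_n_n.
  unfold majorant_term, r0. simpl. unfold_generic_ops. lra.
Qed.

Lemma majorant_lt_1 (n : nat) : majorant n < 1.
Proof.
  pose proof majorant_10_lt_1.
  assert (Htail : forall k, 0 <= 11 / 20 * r0 ^ k / (1 - r0)).
  { intros k. apply Rdiv_le_0_compat; [|unfold r0; lra].
    apply Rmult_le_pos; [lra | apply pow_le; unfold r0; lra]. }
  destruct (Nat.le_gt_cases n 10).
  - pose proof (majorant_le_10 n H0). pose proof (Htail 10%nat). lra.
  - pose proof (majorant_tail_le (n - 10)) as Ht. replace (10 + (n - 10))%nat with n in Ht by lia.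
    pose proof (Htail n). lra.
Qed.

Lemma Re_deriv_partial_sum_gt_0 (a : nat -> C) (n : nat) (z : C) :
  (forall k, (2 <= k)%nat -> (INR k - 1) * Cmod (a k) <= 1 / 2) -> Cmod z <= r0 ->
  0 < Re (1 + sum_n_m (fun k => a k * (INR k * z ^ pred k)) 2 n)%C.
Proof.
  intros Ha Hz.
  set (s := sum_n_m _ 2 n).
  assert (Hs : Cmod s <= majorant n).
  { eapply Rle_trans; [apply (@norm_sum_n_m C_AbsRing CNM)|].
    apply sum_n_m_le_loc. intros k Hk. unfold_generic_ops.
    rewrite !Cmod_mult, Cmod_pow, Cmod_R, Rabs_pos_eq by apply pos_INR.
    assert (HK : 2 <= INR k) by (apply (le_INR 2); lia).
    assert (Hak : Cmod (a k) <= / (2 * (INR k - 1))).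
    { apply Rmult_le_reg_l with (INR k - 1); [lra|].
      replace ((INR k - 1) * / (2 * (INR k - 1))) with (1 / 2) by (field; lra).
      apply Ha. lia. }
    assert (Hzk : Cmod z ^ pred k <= r0 ^ pred k).
    { apply pow_incr. split; [apply Cmod_ge_0 | exact Hz]. }
    pose proof (pow_le (Cmod z) (pred k) (Cmod_ge_0 z)). pose proof (Cmod_ge_0 (a k)).
    unfold majorant_term, Rdiv.
    replace (INR k * / (2 * (INR k - 1)) * r0 ^ pred k)
      with (/ (2 * (INR k - 1)) * (INR k * r0 ^ pred k)) by ring.
    apply Rmult_le_compat; [lra | apply Rmult_le_pos; lra | exact Hak |].
    apply Rmult_le_compat_l; lra. }
  pose proof (majorant_lt_1 n).
  pose proof (re_le_Cmod s) as Hre. pose proof (Rle_abs (- Re s)) as Habs.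
  rewrite Rabs_Ropp in Habs. rewrite re_plus. simpl. lra.
Qed.

Theorem theorem3p3 :
  forall (f phi : C -> C) (a : nat -> C),
    (* f(z) = z + sum_{k>=2} a_k z^k in the unit disk, f analytic there *)
    (forall z, in_disk z -> tail_series a z (Cminus (f z) z)) ->
    analytic_in_disk f ->
    (* phi analytic in the disk with |phi| <= 1 *)
    analytic_in_disk phi ->
    (forall z, in_disk z -> (Cmod (phi z) <= 1)%R) ->
    (* z f'(z) - f(z) = (1/2) z^2 phi(z) in the disk *)
    (forall z, in_disk z ->
       forall fd, C_is_derive f z fd ->
       Cminus (Cmult z fd) (f z) = Cmult (Cmult (Cinv (RtoC 2)) (Cpow z 2)) (phi z)) ->
    (* conclusion: Re s_n'(z; f) > 0 on |z| <= r0 = 0.547, for all n >= 12 *)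
    forall (n : nat), (12 <= n)%nat ->
    forall z, (Cmod z <= 547 / 1000)%R ->
      exists sd, C_is_derive (partial_sum a n) z sd /\ (0 < Re sd)%R.
Proof.
  intros f phi a Hf _ _ Hphi Hrel n _ z Hz.
  eexists. split; [apply is_derive_partial_sum|].
  exact (Re_deriv_partial_sum_gt_0 a n z (coef_bound f phi a Hf Hphi Hrel) Hz).
Qed.
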